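(* Let $\mathcal M=(M,<,+,0,\ldots)$ be a definably complete locally o-minimal expansion of an ordered group. Let $(G,\tau_G)$ be a definable topological group and $H$ a definable normal subgroup of $G$, with $\tau_H$ the relative topology on $H$. If both the definable topological space $(H,\tau_H)$ and the definable quotient group $(G/H,\tau_Q)$ are definably compact, then $(G,\tau_G)$ is definably compact.
   Context: ''Definable'' means definable in $\mathcal M$ with parameters. $\mathcal M$ is an expansion of an ordered group with dense order without endpoints; locally o-minimal: for every definable $X\subseteq M$ and $a\in M$ there is an open interval $I\ni a$ with $X\cap I$ a finite union of points and open intervals; definably complete: every definable subset of $M$ has sup and inf in $M\cup\{\pm\infty\}$. A family $\{S_t:t\in T\}$ is definable if $\bigcup_t \{t\}\times S_t$ and $T$ are definable. A definable topological space is a definable set with a topology having a definable family as open base; it is definably compact if every definable filtered family (for any two members there is a member contained in their intersection) of nonempty closed subsets has nonempty intersection. A definable topological group is a definable group with a definable topology making multiplication and inversion continuous. For a definable continuous action of $H$ on $G$ (here by left multiplication), the definable quotient is a definable topological space $(Q,\tau_Q)$ with a definable continuous map $\pi:G\to Q$ such that every definable continuous map $\varphi$ from $G$ to a definable topological space which is constant on $H$-orbits factors uniquely as $\varphi=\psi\circ\pi$ with $\psi$ definable continuous; it exists and is unique up to definable homeomorphism (concretely: $Q$ a definable set meeting each coset $Hg$ in exactly one point, $\pi$ sending $g$ to that point, and $S\subseteq Q$ open iff $\pi^{-1}(S)$ open). When $H$ is normal, $Q=G/H$ is a definable topological group with multiplication $g_1H\cdot g_2H=g_1g_2H$, called the definable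 quotient group. *)

From mathcomp Require Import all_boot.
Set Implicit Arguments. Unset Strict Implicit. Unset Printing Implicit Defensive.

(* A first-order expansion M of an ordered group, presented (as in van den   *)
(* Dries) by the collection Def n of its definable-with-parameters subsets   *)
(* of M^n, where M^n is represented by 'I_n -> M.                            *)

Record ostructure := OStructure {
  carrier :> Type;
  olt : carrier -> carrier -> Prop;
  oadd : carrier -> carrier -> carrier;
  oopp : carrier -> carrier;
  ozero : carrier;
  Def : forall n : nat, (('I_n -> carrier) -> Prop) -> Prop
}.

Definition vec (M : ostructure) (n : nat) := 'I_n -> carrier M.

Definition ordered_group_axioms (M : ostructure) : Prop :=
  [/\ (forall x : M, ~ olt x x),
      (forall x y z : M, olt x y -> olt y z -> olt x z)
    & (forall x y : M, olt x y \/ x = y \/ olt y x)] /\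
  [/\ (forall x y z : M, oadd x (oadd y z) = oadd (oadd x y) z),
      (forall x : M, oadd (ozero M) x = x /\ oadd x (ozero M) = x),
      (forall x : M, oadd (oopp x) x = ozero M /\ oadd x (oopp x) = ozero M)
    & (forall x y z : M, olt x y -> olt (oadd z x) (oadd z y) /\ olt (oadd x z) (oadd y z))].

Definition dense_no_endpoints (M : ostructure) : Prop :=
  (forall x y : M, olt x y -> exists z, olt x z /\ olt z y) /\
  (forall x : M, exists y z, olt y x /\ olt x z).

(* Def is the family of sets definable with parameters in some expansion of *)
(* (M, <, +, 0): closed under boolean operations, coordinate substitutions  *)
(* (preimages under coordinate maps) and projections (images under          *)
(* coordinate maps, i.e. existential quantification), containing equality, *)
(* the order, the graph of +, and every singleton (parameters).             *)
Record structure_axioms (M : ostructure) : Prop := {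
  def_ext : forall n (A B : vec M n -> Prop),
      (forall x, A x <-> B x) -> Def A -> Def B;
  def_compl : forall n (A : vec M n -> Prop), Def A -> Def (fun x => ~ A x);
  def_union : forall n (A B : vec M n -> Prop),
      Def A -> Def B -> Def (fun x => A x \/ B x);
  def_preim : forall n m (f : 'I_m -> 'I_n) (A : vec M m -> Prop),
      Def A -> Def (fun x : vec M n => A (fun i => x (f i)));
  def_proj : forall n m (f : 'I_m -> 'I_n) (A : vec M n -> Prop),
      Def A -> Def (fun y : vec M m => exists x, A x /\ forall i, x (f i) = y i);
  def_eq : forall n (i j : 'I_n), Def (fun x : vec M n => x i = x j);
  def_lt : forall n (i j : 'I_n), Def (fun x : vec M n => olt (x i) (x j));
  def_add : forall n (i j k : 'I_n),
      Def (fun x : vec M n => oadd (x i) (x j) = x k);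
  def_const : forall n (i : 'I_n) (a : M), Def (fun x : vec M n => x i = a)
}.

Definition at0 (M : ostructure) (X : M -> Prop) : vec M 1 -> Prop :=
  fun x => X (x ord0).

Definition def_complete (M : ostructure) : Prop :=
  forall X : M -> Prop, Def (at0 X) ->
    ((exists x, X x) -> (exists b, forall x, X x -> ~ olt b x) ->
       exists s, (forall x, X x -> ~ olt s x) /\
                 (forall b, (forall x, X x -> ~ olt b x) -> ~ olt b s)) /\
    ((exists x, X x) -> (exists b, forall x, X x -> ~ olt x b) ->
       exists s, (forall x, X x -> ~ olt x s) /\
                 (forall b, (forall x, X x -> ~ olt x b) -> ~ olt s b)).

Definition loc_ominimal (M : ostructure) : Prop :=
  forall (X : M -> Prop) (a : M), Def (at0 X) ->
    exists b c, olt b a /\ olt a c /\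
      exists (np : nat) (pts : 'I_np -> M) (ni : nat) (l r : 'I_ni -> M),
        forall x, (X x /\ olt b x /\ olt x c) <->
                  ((exists i, x = pts i) \/ (exists j, olt (l j) x /\ olt x (r j))).

Definition DCLOM (M : ostructure) : Prop :=
  [/\ ordered_group_axioms M, dense_no_endpoints M, structure_axioms M,
      def_complete M & loc_ominimal M].

Definition lpart (M : ostructure) n m (z : vec M (n + m)) : vec M n :=
  fun j => z (lshift m j).
Definition rpart (M : ostructure) n m (z : vec M (n + m)) : vec M m :=
  fun j => z (rshift n j).

Definition def_family (M : ostructure) k n
    (T : vec M k -> Prop) (S : vec M k -> vec M n -> Prop) : Prop :=
  Def T /\ Def (fun z : vec M (k + n) => T (lpart z) /\ S (lpart z) (rpart z)).

Definition def_map (M : ostructure) n m (X : vec M n -> Prop)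
    (f : vec M n -> vec M m) : Prop :=
  Def X /\
  Def (fun z : vec M (n + m) => X (lpart z) /\ forall i, rpart z i = f (lpart z) i).

Definition def_base (M : ostructure) n k (X : vec M n -> Prop)
    (T : vec M k -> Prop) (B : vec M k -> vec M n -> Prop) : Prop :=
  [/\ def_family T B,
      (forall t x, T t -> B t x -> X x),
      (forall x, X x -> exists t, T t /\ B t x)
    & (forall s t x, T s -> T t -> B s x -> B t x ->
         exists r, T r /\ B r x /\ forall y, B r y -> B s y /\ B t y)].

Definition bopen (M : ostructure) n k (X : vec M n -> Prop)
    (T : vec M k -> Prop) (B : vec M k -> vec M n -> Prop)
    (U : vec M n -> Prop) : Prop :=
  (forall x, U x -> X x) /\
  (forall x, U x -> exists t, T t /\ B t x /\ forall y, B t y -> U y).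

Definition def_compact (M : ostructure) n (X : vec M n -> Prop)
    (isopen : (vec M n -> Prop) -> Prop) : Prop :=
  forall k (S : vec M k -> Prop) (C : vec M k -> vec M n -> Prop),
    def_family S C ->
    (exists s, S s) ->
    (forall s, S s -> (forall x, C s x -> X x) /\ isopen (fun x => X x /\ ~ C s x)) ->
    (forall s, S s -> exists x, C s x) ->
    (forall s t, S s -> S t -> exists r, S r /\ forall x, C r x -> C s x /\ C t x) ->
    exists x, X x /\ forall s, S s -> C s x.

Definition is_group (M : ostructure) n (G : vec M n -> Prop)
    (mul : vec M n -> vec M n -> vec M n) (inv : vec M n -> vec M n)
    (e : vec M n) : Prop :=
  [/\ G e,
      (forall x y, G x -> G y -> G (mul x y))
    & (forall x, G x -> G (inv x))] /\
  [/\ 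
      (forall x y z, G x -> G y -> G z -> mul x (mul y z) = mul (mul x y) z),
      (forall x, G x -> mul e x = x /\ mul x e = x)
    & (forall x, G x -> mul (inv x) x = e /\ mul x (inv x) = e)].

Definition is_def_topgroup (M : ostructure) n k (G : vec M n -> Prop)
    (mul : vec M n -> vec M n -> vec M n) (inv : vec M n -> vec M n)
    (e : vec M n) (T : vec M k -> Prop) (B : vec M k -> vec M n -> Prop) : Prop :=
  [/\ Def G,
      is_group G mul inv e,
      def_map (fun z : vec M (n + n) => G (lpart z) /\ G (rpart z))
              (fun z => mul (lpart z) (rpart z)),
      def_map G inv
    & def_base G T B] /\
  (
      (forall x y, G x -> G y -> forall W, bopen G T B W -> W (mul x y) ->
         exists U V, [/\ bopen G T B U, bopen G T B V, U x, V y &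
                         forall u v, U u -> V v -> W (mul u v)])
    /\
      (forall x, G x -> forall W, bopen G T B W -> W (inv x) ->
         exists U, [/\ bopen G T B U, U x & forall u, U u -> W (inv u)])).

Definition is_def_normal_subgroup (M : ostructure) n (G H : vec M n -> Prop)
    (mul : vec M n -> vec M n -> vec M n) (inv : vec M n -> vec M n)
    (e : vec M n) : Prop :=
  [/\ Def H, (forall x, H x -> G x) & H e] /\
  [/\ 
      (forall x y, H x -> H y -> H (mul x y)),
      (forall x, H x -> H (inv x))
    & (forall g h, G g -> H h -> H (mul (mul g h) (inv g)))].

Definition rel_open (M : ostructure) n k (G H : vec M n -> Prop)
    (T : vec M k -> Prop) (B : vec M k -> vec M n -> Prop)
    (U : vec M n -> Prop) : Prop :=
  exists V, bopen G T B V /\ forall x, U x <-> V x /\ H x.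

Definition in_coset (M : ostructure) n (H : vec M n -> Prop)
    (mul : vec M n -> vec M n -> vec M n) (g q : vec M n) : Prop :=
  exists h, H h /\ q = mul h g.

Definition def_transversal (M : ostructure) n (G H Q : vec M n -> Prop)
    (mul : vec M n -> vec M n -> vec M n) : Prop :=
  [/\ Def Q, (forall q, Q q -> G q)
    & (forall g, G g -> exists q, [/\ Q q, in_coset H mul g q &
                                   forall q', Q q' -> in_coset H mul g q' -> q' = q])].

(* quotient topology tau_Q on Q: S open iff pi^-1(S) is open in G, where    *)
(* pi(g) is the unique point of Q in H g.                                    *)
Definition quot_open (M : ostructure) n k (G H Q : vec M n -> Prop)
    (mul : vec M n -> vec M n -> vec M n)
    (T : vec M k -> Prop) (B : vec M k -> vec M n -> Prop)
    (S : vec M n -> Prop) : Prop :=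
  (forall q, S q -> Q q) /\
  bopen G T B (fun g => G g /\ exists q, [/\ Q q, S q & in_coset H mul g q]).

From mathcomp Require Import all_boot.
From Stdlib Require Import Classical FunctionalExtensionality.
Set Implicit Arguments. Unset Strict Implicit. Unset Printing Implicit Defensive.

(* Let {C_s} be a definable filtered family of nonempty closed subsets of G.
   The closures in G of the saturations H C_s are H-invariant, so their traces
   on the transversal Q are closed in G/H and form a filtered family there;
   compactness of G/H gives q in all of them.  Every basic neighbourhood B_t of
   q then meets H C_s, so the closures in H of the sets of y in H with y B_t
   meeting C_s are nonempty and filtered; compactness of H gives h0 in all of
   them.  Continuity of multiplication at (h0, q) and closedness of C_s force
   h0 q into every C_s. *)

Section DefinableSets.
Variable M : ostructure.
Hypothesis hM : structure_axioms M.

Definition concat N m (y : vec M N) (z : vec M m) : vec M (N + m) :=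
  fun i => match split i with inl a => y a | inr b => z b end.

Definition cat_idx N a b (s1 : 'I_a -> 'I_N) (s2 : 'I_b -> 'I_N) : 'I_(a + b) -> 'I_N :=
  fun i => match split i with inl j => s1 j | inr j => s2 j end.

Lemma split_lshift a b (j : 'I_a) : split (lshift b j) = inl j.
Proof. exact: (unsplitK (inl j : 'I_a + 'I_b)). Qed.

Lemma split_rshift a b (j : 'I_b) : split (rshift a j) = inr j.
Proof. exact: (unsplitK (inr j : 'I_a + 'I_b)). Qed.

Lemma lpart_concat N m (y : vec M N) (z : vec M m) : lpart (concat y z) = y.
Proof. by apply: functional_extensionality => j; rewrite /lpart /concat split_lshift. Qed.

Lemma rpart_concat N m (y : vec M N) (z : vec M m) : rpart (concat y z) = z.
Proof. by apply: functional_extensionality => j; rewrite /rpart /concat split_rshift. Qed.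

Lemma lpart_cat_idx N a b s1 s2 (x : vec M N) :
  lpart (fun i => x (@cat_idx N a b s1 s2 i)) = (fun i => x (s1 i)).
Proof. by apply: functional_extensionality => j; rewrite /lpart /cat_idx split_lshift. Qed.

Lemma rpart_cat_idx N a b s1 s2 (x : vec M N) :
  rpart (fun i => x (@cat_idx N a b s1 s2 i)) = (fun i => x (s2 i)).
Proof. by apply: functional_extensionality => j; rewrite /rpart /cat_idx split_rshift. Qed.

Lemma def_equiv N (A A' : vec M N -> Prop) : Def A -> (forall x, A x <-> A' x) -> Def A'.
Proof. by move=> dA eqA; apply: (def_ext hM eqA). Qed.

Lemma def_and N (A A' : vec M N -> Prop) : Def A -> Def A' -> Def (fun x => A x /\ A' x).
Proof.
move=> dA dA'.
apply: def_equiv (def_compl hM (def_union hM (def_compl hM dA) (def_compl hM dA'))) _.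
move=> x; split=> [nor | [Ax A'x] []//]; split; apply: NNPP => nAx; apply: nor; tauto.
Qed.

Lemma def_imp N (A A' : vec M N -> Prop) : Def A -> Def A' -> Def (fun x => A x -> A' x).
Proof.
move=> dA dA'; apply: def_equiv (def_union hM (def_compl hM dA) dA') _.
by move=> x; split=> [|AA']; [tauto | case: (classic (A x)); tauto].
Qed.

Lemma def_exists N m (A : vec M N -> vec M m -> Prop) :
  Def (fun w : vec M (N + m) => A (lpart w) (rpart w)) -> Def (fun y => exists z, A y z).
Proof.
move=> dA; apply: def_equiv (def_proj hM (lshift m) dA) _ => y; split.
  case=> x [Ax xy]; exists (rpart x).
  suff -> : y = lpart x by [].
  by apply: functional_extensionality => i; rewrite -xy.
case=> z Ayz; exists (concat y z); rewrite lpart_concat rpart_concat; split=> // i.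
by rewrite /concat split_lshift.
Qed.

Lemma def_forall N m (A : vec M N -> vec M m -> Prop) :
  Def (fun w : vec M (N + m) => A (lpart w) (rpart w)) -> Def (fun y => forall z, A y z).
Proof.
move=> dA.
apply: def_equiv (def_compl hM (@def_exists N m (fun y z => ~ A y z) (def_compl hM dA))) _.
move=> y; split=> [nex z | all [z nA]]; last exact: nA.
by apply: NNPP => nA; apply: nex; exists z.
Qed.

Lemma def_true N : Def (fun _ : vec M N => True).
Proof.
apply: def_equiv (def_proj hM (lshift 1) (def_eq hM (rshift N ord0) (rshift N ord0))) _.
move=> y; split=> // _; exists (concat y (fun _ => ozero M)); split=> // i.
by rewrite /concat split_lshift.
Qed.

Lemma def_forall_ord N m (P : 'I_m -> vec M N -> Prop) :
  (forall i, Def (P i)) -> Def (fun x => forall i, P i x).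
Proof.
move=> dP.
suff /(_ (enum 'I_m)) dall : forall l : seq 'I_m, Def (fun x => forall i, i \in l -> P i x).
  apply: def_equiv dall _ => x; split=> [Pl i | Pall i _]; last exact: Pall.
  by apply: Pl; rewrite mem_enum.
elim=> [|a l IHl].
  by apply: def_equiv (def_true N) _ => x; split=> // _ i; rewrite in_nil.
apply: def_equiv (def_and (dP a) IHl) _ => x; split.
  by case=> Pa Pl i; rewrite in_cons => /orP [/eqP -> //|]; apply: Pl.
move=> Pal; split; first by apply: Pal; rewrite in_cons eqxx.
by move=> i il; apply: Pal; rewrite in_cons il orbT.
Qed.

Lemma def_vec_const N m (s : 'I_m -> 'I_N) (a : vec M m) :
  Def (fun x : vec M N => (fun i => x (s i)) = a).
Proof.
apply: def_equiv (def_forall_ord (fun i => def_const hM (s i) (a i))) _ => x.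
by split=> [xa | <-]; first exact: functional_extensionality.
Qed.

Lemma def_at N m (A : vec M m -> Prop) (s : 'I_m -> 'I_N) :
  Def A -> Def (fun x : vec M N => A (fun i => x (s i))).
Proof. exact: def_preim. Qed.

Lemma def_rel_at N a b (A : vec M a -> vec M b -> Prop) (s1 : 'I_a -> 'I_N) (s2 : 'I_b -> 'I_N) :
  Def (fun z : vec M (a + b) => A (lpart z) (rpart z)) ->
  Def (fun x : vec M N => A (fun i => x (s1 i)) (fun i => x (s2 i))).
Proof.
move=> dA; apply: def_equiv (def_preim hM (cat_idx s1 s2) dA) _ => x.
by rewrite lpart_cat_idx rpart_cat_idx.
Qed.

Lemma def_family_at N a b (S : vec M a -> Prop) (A : vec M a -> vec M b -> Prop)
    (s1 : 'I_a -> 'I_N) (s2 : 'I_b -> 'I_N) :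
  def_family S A ->
  Def (fun x : vec M N => S (fun i => x (s1 i)) /\ A (fun i => x (s1 i)) (fun i => x (s2 i))).
Proof. by case=> _ dA; exact: (def_rel_at (A := fun s y => S s /\ A s y) s1 s2 dA). Qed.

Lemma def_op_graph_at N a (X : vec M a -> Prop) (f : vec M a -> vec M a -> vec M a)
    (s1 s2 s3 : 'I_a -> 'I_N) :
  def_map (fun z : vec M (a + a) => X (lpart z) /\ X (rpart z)) (fun z => f (lpart z) (rpart z)) ->
  Def (fun x : vec M N => (X (fun i => x (s1 i)) /\ X (fun i => x (s2 i))) /\
         forall i, x (s3 i) = f (fun i => x (s1 i)) (fun i => x (s2 i)) i).
Proof.
case=> _ dgraph.
have := def_rel_at (A := fun u w => (X (lpart u) /\ X (rpart u)) /\ forall i, w i = f (lpart u) (rpart u) i)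
  (cat_idx s1 s2) s3 dgraph.
by move/def_equiv; apply=> x; rewrite lpart_cat_idx rpart_cat_idx.
Qed.

End DefinableSets.

(* A first-order formula over definable atoms is definable: unfolding [lpart]
   and [rpart] exposes every atom as a definable set read through a coordinate map. *)
Ltac def_auto :=
  lazymatch goal with hM : structure_axioms _ |- _ =>
  let def_atom :=
    first
    [ exact: (def_vec_const hM _ _)
    | match goal with
      | h : Def _ |- _ => exact: (def_at hM _ h)
      | h : def_family _ _ |- _ => exact: (def_family_at hM _ _ h)
      | h : def_family _ _ |- _ => exact: (def_at hM _ (proj1 h))
      | h : def_map _ _ |- _ => exact: (def_op_graph_at hM _ _ _ h)
      end ] in
  repeat first
    [ def_atom
    | progress rewrite /lpart /rpart /=
    | apply: (def_and hM) | apply: (def_imp hM)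
    | apply: (def_exists hM) | apply: (def_forall hM) ]
  end.

Section BaseTopology.
Variables (M : ostructure) (n k : nat) (X : vec M n -> Prop)
  (T : vec M k -> Prop) (B : vec M k -> vec M n -> Prop).

Definition adherent (A : vec M n -> Prop) (x : vec M n) : Prop :=
  forall t, T t -> B t x -> exists y, B t y /\ A y.

Lemma adherent_of_mem (A : vec M n -> Prop) x : A x -> adherent A x.
Proof. by move=> Ax t _ Btx; exists x. Qed.

Lemma adherent_sub (A A' : vec M n -> Prop) x :
  (forall y, A y -> A' y) -> adherent A x -> adherent A' x.
Proof.
move=> AA' adhx t Tt Btx; have [y [Bty Ay]] := adhx t Tt Btx.
by exists y; split=> //; apply: AA'.
Qed.

Lemma bopen_ext (U V : vec M n -> Prop) :
  (forall x, U x <-> V x) -> bopen X T B U -> bopen X T B V.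
Proof.
move=> UV [UX openU]; split=> [x /UV /UX //| x /UV /openU [t [Tt [Btx sub]]]].
by exists t; split=> //; split=> // y /sub /UV.
Qed.

Hypothesis base : def_base X T B.

Lemma bopen_base t : T t -> bopen X T B (B t).
Proof.
case: base => _ BX _ inter Tt; split=> [x | x Btx]; first exact: BX.
have [r [Tr [Brx sub]]] := inter t t x Tt Tt Btx Btx.
by exists r; split=> //; split=> // y /sub [].
Qed.

Lemma bopen_not_adherent (A : vec M n -> Prop) :
  bopen X T B (fun x => X x /\ ~ adherent A x).
Proof.
case: base => _ BX _ _; split=> [x [] //| x [Xx nadh]].
have [t [Tt [Btx BtA]]] : exists t, T t /\ B t x /\ forall y, B t y -> ~ A y.
  apply: NNPP => nex; apply: nadh => t Tt Btx; apply: NNPP => nmeet.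
  by apply: nex; exists t; do 2 split=> //; move=> y Bty Ay; apply: nmeet; exists y.
exists t; do 2 split=> //; move=> y Bty; split; first exact: BX Bty.
by move=> adhy; have [z [Btz Az]] := adhy t Tt Bty; exact: BtA Btz Az.
Qed.

End BaseTopology.

Section DefinableFamilies.
Variables (M : ostructure) (n p : nat) (S : vec M p -> Prop) (A : vec M p -> vec M n -> Prop).
Hypotheses (hM : structure_axioms M) (famA : def_family S A).

Lemma def_family_meet (X : vec M n -> Prop) :
  Def X -> def_family S (fun s x => X x /\ A s x).
Proof.
move=> dX; split; first exact: proj1 famA.
apply: (def_equiv hM (A := fun z => S (lpart z) /\ X (rpart z) /\ S (lpart z) /\ A (lpart z) (rpart z))).
  by def_auto.
by move=> z; tauto.
Qed.

Lemma def_family_restrict (S' : vec M p -> Prop) :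
  Def S' -> (forall s, S' s -> S s) -> def_family S' A.
Proof.
move=> dS' S'S; split=> //.
apply: (def_equiv hM (A := fun z => S' (lpart z) /\ S (lpart z) /\ A (lpart z) (rpart z))).
  by def_auto.
by move=> z; have := S'S (lpart z); tauto.
Qed.

Lemma def_family_adherent k (T : vec M k -> Prop) (B : vec M k -> vec M n -> Prop) :
  def_family T B -> def_family S (fun s => adherent T B (A s)).
Proof.
move=> famB; split; first exact: proj1 famA.
apply: (def_equiv hM (A := fun z => S (lpart z) /\ forall t, T t /\ B t (rpart z) ->
  exists y, (T t /\ B t y) /\ S (lpart z) /\ A (lpart z) y)).
  by def_auto.
move=> z; split=> -[Sz adh]; split=> // t.
  by move=> Tt Btz; have [y [[_ Bty] [_ Ay]]] := adh t (conj Tt Btz); exists y.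
by move=> [Tt Btz]; have [y [Bty Ay]] := adh t Tt Btz; exists y.
Qed.

End DefinableFamilies.

Section QuotientCompactness.
Variables (M : ostructure) (n k : nat) (G H Q : vec M n -> Prop)
  (mul : vec M n -> vec M n -> vec M n) (inv : vec M n -> vec M n) (e : vec M n)
  (T : vec M k -> Prop) (B : vec M k -> vec M n -> Prop).
Hypotheses (hM : structure_axioms M) (topG : is_def_topgroup G mul inv e T B)
  (normH : is_def_normal_subgroup G H mul inv e) (trQ : def_transversal G H Q mul).

Lemma baseG : def_base G T B.
Proof. by case: topG => -[]. Qed.

Lemma memG_mul x y : G x -> G y -> G (mul x y).
Proof. by case: topG => -[_ [[_ Gmul _] _] _ _ _] _; apply: Gmul. Qed.

Lemma memG_inv x : G x -> G (inv x).
Proof. by case: topG => -[_ [[_ _ Ginv] _] _ _ _] _; apply: Ginv. Qed.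

Lemma mulA x y z : G x -> G y -> G z -> mul x (mul y z) = mul (mul x y) z.
Proof. by case: topG => -[_ [_ [assoc _ _]] _ _ _] _; apply: assoc. Qed.

Lemma mulKg a x : G a -> G x -> mul (inv a) (mul a x) = x.
Proof.
move=> Ga Gx; case: topG => -[_ [_ [_ unit invax]] _ _ _] _.
have Gia := memG_inv Ga.
by rewrite mulA // (invax a Ga).1 (unit x Gx).1.
Qed.

Lemma memH_G x : H x -> G x.
Proof. by case: normH => -[_ HG _] _; apply: HG. Qed.

Lemma memH_mul x y : H x -> H y -> H (mul x y).
Proof. by case: normH => _ [Hmul _ _]; apply: Hmul. Qed.

Lemma memH_inv x : H x -> H (inv x).
Proof. by case: normH => _ [_ Hinv _]; apply: Hinv. Qed.

Lemma translate_nbhd a x W : G a -> G x -> bopen G T B W -> W (mul a x) ->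
  exists t, [/\ T t, B t x & forall y, B t y -> W (mul a y)].
Proof.
case: topG => _ [mul_cont _] Ga Gx openW Wax.
have [U [V [_ [_ openV] Ua Vx UV]]] := mul_cont a x Ga Gx W openW Wax.
have [t [Tt [Btx BtV]]] := openV x Vx.
by exists t; split=> // y /BtV; apply: UV.
Qed.

Lemma adherent_translate a (A : vec M n -> Prop) x :
  G a -> G x -> (forall y, A y -> A (mul a y)) ->
  adherent T B A x -> adherent T B A (mul a x).
Proof.
move=> Ga Gx Ainv adhx t Tt Btax.
have [t' [Tt' Bt'x Bt'B]] := translate_nbhd Ga Gx (bopen_base baseG Tt) Btax.
have [y [Bt'y Ay]] := adhx t' Tt' Bt'x.
by exists (mul a y); split; [apply: Bt'B | apply: Ainv].
Qed.

Lemma adherent_coset (A : vec M n -> Prop) g q :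
  (forall h y, H h -> A y -> A (mul h y)) -> G g -> in_coset H mul g q ->
  adherent T B A q <-> adherent T B A g.
Proof.
move=> Ainv Gg [h [Hh ->]]; have Gh := memH_G Hh.
split=> [adhq | adhg]; last exact: adherent_translate Gh Gg (fun y => Ainv h y Hh) adhg.
rewrite -(mulKg Gh Gg); apply: adherent_translate (memG_mul Gh Gg) _ adhq.
  exact: memG_inv.
by move=> y; apply: Ainv; apply: memH_inv.
Qed.

Lemma quot_open_not_adherent (A : vec M n -> Prop) :
  (forall h y, H h -> A y -> A (mul h y)) ->
  quot_open G H Q mul T B (fun q => Q q /\ ~ (Q q /\ adherent T B A q)).
Proof.
case: trQ => _ QG transversal Ainv; split=> [q [] //|].
apply: bopen_ext (bopen_not_adherent baseG A) => g; split.
  case=> Gg nadhg; split=> //; have [q [Qq gq _]] := transversal g Gg.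
  by exists q; split=> //; split=> // -[_]; rewrite (adherent_coset Ainv Gg gq).
case=> Gg [q [Qq [_ nadhq] gq]]; split=> // adhg.
by apply: nadhq; split=> //; rewrite (adherent_coset Ainv Gg gq).
Qed.

Lemma rel_open_not_adherent (A : vec M n -> Prop) :
  rel_open G H T B (fun x => H x /\ ~ (H x /\ adherent T B A x)).
Proof.
exists (fun x => G x /\ ~ adherent T B A x); split; first exact: bopen_not_adherent baseG A.
by move=> x; have := @memH_G x; tauto.
Qed.

Definition saturation (A : vec M n -> Prop) (m : vec M n) : Prop :=
  exists h c, [/\ H h, A c & m = mul h c].

Lemma saturation_invariant (A : vec M n -> Prop) h m :
  (forall c, A c -> G c) -> H h -> saturation A m -> saturation A (mul h m).
Proof.
move=> AG Hh [h' [c [Hh' Ac ->]]]; exists (mul h h'), c; split=> //.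
  exact: memH_mul.
by rewrite mulA //; [apply: memH_G | apply: memH_G | apply: AG].
Qed.

Lemma saturation_sub (A A' : vec M n -> Prop) m :
  (forall c, A c -> A' c) -> saturation A m -> saturation A' m.
Proof. by move=> AA' [h [c [Hh /AA' A'c ->]]]; exists h, c. Qed.

Section ClosedFamily.
Variables (p : nat) (S : vec M p -> Prop) (C : vec M p -> vec M n -> Prop).
Hypotheses (famC : def_family S C)
  (closedC : forall s, S s -> (forall x, C s x -> G x) /\ bopen G T B (fun x => G x /\ ~ C s x)).

Lemma memC_G s : S s -> forall x, C s x -> G x.
Proof. by case/closedC. Qed.

Lemma def_family_saturation : def_family S (fun s => saturation (C s)).
Proof.
split; first exact: proj1 famC.
case: topG => -[dG _ dmul _ _] _; case: normH => -[dH _ _] _.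
apply: (def_equiv hM (A := fun z => S (lpart z) /\ exists h, H h /\ exists c,
  (S (lpart z) /\ C (lpart z) c) /\ ((G h /\ G c) /\ forall i, rpart z i = mul h c i))).
  by def_auto.
move=> z; split=> -[Sz satz]; split=> //.
  case: satz => h [Hh [c [[_ Cc] [_ eqz]]]]; exists h, c; split=> //.
  exact: functional_extensionality.
case: satz => h [c [Hh Cc ->]]; exists h; split=> //; exists c; do 2 split=> //.
by split; [apply: memH_G | exact: (memC_G Sz Cc)].
Qed.

Definition hitting (s : vec M p) (t : vec M k) (y : vec M n) : Prop :=
  H y /\ exists u, B t u /\ C s (mul y u).

Lemma def_family_hitting :
  def_family (fun w : vec M (p + k) => S (lpart w) /\ T (rpart w))
             (fun w => hitting (lpart w) (rpart w)).
Proof.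
case: topG => -[dG _ dmul _ [famB _ _ _]] _; case: normH => -[dH _ _] _.
split; first by def_auto.
apply: (def_equiv hM (A := fun z => (S (lpart (lpart z)) /\ T (rpart (lpart z))) /\
  H (rpart z) /\ exists u, (T (rpart (lpart z)) /\ B (rpart (lpart z)) u) /\ exists c,
  (S (lpart (lpart z)) /\ C (lpart (lpart z)) c) /\
  ((G (rpart z) /\ G u) /\ forall i, c i = mul (rpart z) u i))).
  by def_auto.
move=> z; split=> -[[Sz Tz] [Hy hit]]; do 2 split=> //.
  case: hit => u [[_ Bu] [c [[_ Cc] [_ eqc]]]]; exists u; split=> //.
  by have -> : mul (rpart z) u = c by apply: functional_extensionality.
case: hit => u [Bu Cyu]; exists u; split=> //; exists (mul (rpart z) u).
split=> //; split=> //; split; first exact: memH_G.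
exact: (bopen_base baseG Tz).1 u Bu.
Qed.

Lemma hitting_sub s s' t t' y :
  (forall c, C s c -> C s' c) -> (forall u, B t u -> B t' u) -> hitting s t y -> hitting s' t' y.
Proof. by move=> CC' BB' [Hy [u [/BB' Bu /CC' Cu]]]; split=> //; exists u. Qed.

Lemma mem_of_adherent_hitting h0 q s :
  H h0 -> G q -> S s -> (forall t, T t -> B t q -> adherent T B (hitting s t) h0) ->
  C s (mul h0 q).
Proof.
move=> Hh0 Gq Ss adhh0; apply: NNPP => nC; have Gh0 := memH_G Hh0.
have [_ [_ openC]] := closedC Ss.
have [t [Tt [Btx BtC]]] := openC _ (conj (memG_mul Gh0 Gq) nC).
case: topG => _ [mul_cont _].
have [U [V [[_ openU] [_ openV] Uh0 Vq UV]]] := mul_cont h0 q Gh0 Gq _ (bopen_base baseG Tt) Btx.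
have [t1 [T1 [B1q B1V]]] := openV q Vq.
have [t0 [T0 [B0h0 B0U]]] := openU h0 Uh0.
have [y [B0y [_ [u [B1u Cyu]]]]] := adhh0 t1 T1 B1q t0 T0 B0h0.
by have [_ []] := BtC _ (UV _ _ (B0U _ B0y) (B1V _ B1u)).
Qed.

Hypotheses (neS : exists s, S s) (neC : forall s, S s -> exists x, C s x)
  (filtC : forall s s', S s -> S s' -> exists r, S r /\ forall x, C r x -> C s x /\ C s' x).

Lemma exists_adherent_saturation_Q :
  def_compact Q (quot_open G H Q mul T B) ->
  exists q, Q q /\ forall s, S s -> adherent T B (saturation (C s)) q.
Proof.
case: trQ => dQ _ transversal compactQ; have [famB _ _ _] := baseG.
have [q [Qq adhq]] : exists q, Q q /\ forall s, S s -> Q q /\ adherent T B (saturation (C s)) q.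
  apply: compactQ neS _ _ _; first exact (def_family_meet hM (def_family_adherent hM def_family_saturation famB) dQ).
  - move=> s Ss; split=> [x [] //|]; apply: quot_open_not_adherent => h y.
    exact: saturation_invariant (memC_G Ss).
  - move=> s Ss; have [c Cc] := neC Ss.
    have [q [Qq [h [Hh qE]] _]] := transversal c (memC_G Ss Cc).
    by exists q; split=> //; apply: adherent_of_mem; exists h, c.
  - move=> s1 s2 S1 S2; have [r [Sr Cr]] := filtC S1 S2; exists r; split=> // x [Qx adhx].
    by split; split=> //; apply: adherent_sub adhx => y; apply: saturation_sub => c /Cr [].
by exists q; split=> // s /adhq [].
Qed.

Lemma exists_adherent_hitting_H q :
  def_compact H (rel_open G H T B) -> Q q ->
  (forall s, S s -> adherent T B (saturation (C s)) q) ->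
  exists h0, H h0 /\ forall s t, S s -> T t -> B t q -> adherent T B (hitting s t) h0.
Proof.
move=> compactH Qq adhq.
have Gq : G q by case: trQ => _ QG _; apply: QG.
have [famB _ cover inter] := baseG.
case: normH => -[dH _ _] _; case: trQ => dQ _ _.
have dW : Def (fun w : vec M (p + k) => S (lpart w) /\ T (rpart w) /\ B (rpart w) q).
  apply: (def_equiv hM (A := fun w => S (lpart w) /\ exists z, z = q /\ T (rpart w) /\ B (rpart w) z)).
    by def_auto.
  by move=> w; split=> [[Sw [z [-> TB]]] | [Sw TB]]; last (split=> //; exists q).
have [h0 [Hh0 adhh0]] : exists h0, H h0 /\ forall w, S (lpart w) /\ T (rpart w) /\ B (rpart w) q ->
    H h0 /\ adherent T B (hitting (lpart w) (rpart w)) h0.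
  apply: compactH.
  - apply (def_family_restrict hM
      (def_family_meet hM (def_family_adherent hM def_family_hitting famB) dH) dW).
    by move=> w [Sw [Tw _]].
  - have [s Ss] := neS; have [t [Tt Btq]] := cover q Gq.
    by exists (concat s t); rewrite lpart_concat rpart_concat.
  - by move=> w _; split=> [x [] //|]; exact: rel_open_not_adherent.
  - move=> w [Sw [Tw Btq]]; have [y [Bty [h [c [Hh Cc yE]]]]] := adhq _ Sw _ Tw Btq.
    have Hih := memH_inv Hh; exists (inv h); split=> //; apply: adherent_of_mem.
    split=> //; exists y; split=> //.
    by rewrite yE mulKg //; [apply: memH_G | exact: (memC_G Sw Cc)].
  - move=> w1 w2 [S1 [T1 B1]] [S2 [T2 B2]].
    have [r [Sr Cr]] := filtC S1 S2; have [t [Tt [Btq Bt]]] := inter _ _ q T1 T2 B1 B2.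
    exists (concat r t); rewrite lpart_concat rpart_concat; split=> // x [Hx adhx].
    by split; split=> //; apply: adherent_sub adhx => y; apply: hitting_sub => ?;
      [move/Cr => [] | move/Bt => [] | move/Cr => [] | move/Bt => []].
exists h0; split=> // s t Ss Tt Btq.
by have := adhh0 (concat s t); rewrite lpart_concat rpart_concat => /(_ (conj Ss (conj Tt Btq))) [].
Qed.

End ClosedFamily.

End QuotientCompactness.

Theorem theorem5p7 (M : ostructure) (n k : nat)
    (G H : vec M n -> Prop)
    (mul : vec M n -> vec M n -> vec M n) (inv : vec M n -> vec M n) (e : vec M n)
    (T : vec M k -> Prop) (B : vec M k -> vec M n -> Prop) :
  DCLOM M ->
  is_def_topgroup G mul inv e T B ->
  is_def_normal_subgroup G H mul inv e ->
  def_compact H (rel_open G H T B) ->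
  (exists Q, def_transversal G H Q mul /\ def_compact Q (quot_open G H Q mul T B)) ->
  def_compact G (bopen G T B).
Proof.
move=> [_ _ hM _ _] topG normH compactH [Q [trQ compactQ]] p S C famC neS closedC neC filtC.
have [q [Qq adhq]] :=
  exists_adherent_saturation_Q hM topG normH trQ famC closedC neS neC filtC compactQ.
have [h0 [Hh0 adhh0]] :=
  exists_adherent_hitting_H hM topG normH trQ famC closedC neS filtC compactH Qq adhq.
have Gq : G q by case: trQ => _ QG _; apply: QG.
exists (mul h0 q); split; first exact: (memG_mul topG (memH_G normH Hh0) Gq).
move=> s Ss; apply: (mem_of_adherent_hitting topG normH closedC Hh0 Gq Ss) => t.
exact: adhh0.
Qed.
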